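(* For every positive integer $n$, the $n$th Catalan number $C_n=\frac{1}{n+1}\binom{2n}{n}$ equals the determinant $$C_n=\det\left(\binom{i+1}{j-i+1}\right)_{i,j=0}^{n-1},$$ i.e. the determinant of the $n\times n$ Hessenberg matrix whose row $i$ ($0\le i\le n-1$) contains the entries $\binom{i+1}{0},\binom{i+1}{1},\dots$ starting in column $i-1$ (so row $0$ is $(\binom{1}{1},0,\dots,0)$, row $1$ is $(\binom{2}{0},\binom{2}{1},\binom{2}{2},0,\dots)$, row $2$ is $(0,\binom{3}{0},\binom{3}{1},\binom{3}{2},\binom{3}{3},0,\dots)$, and the last row is $(0,\dots,0,\binom{n}{0},\binom{n}{1})$), all entries outside the matrix being truncated.
   Context: Convention: $\binom{a}{b}=0$ if $b<0$ or $b>a$ (for nonnegative integer $a$). Rows and columns are indexed from $0$ to $n-1$. *)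

From HB Require Import structures.
From mathcomp Require Import all_boot all_order all_algebra.
Set Implicit Arguments. Unset Strict Implicit. Unset Printing Implicit Defensive.
Import GRing.Theory.

(* n-th Catalan number C_n = binom(2n,n)/(n+1) (exact division in nat). *)
Definition catalan (n : nat) : nat := 'C(2 * n, n) %/ n.+1.

Definition binomz (a : nat) (b : int) : nat :=
  match b with
  | Posz k => 'C(a, k)
  | Negz _ => 0
  end.

Definition catalan_mx (n : nat) : 'M[int]_n :=
  \matrix_(i < n, j < n) (Posz (binomz i.+1 (Posz j - Posz i + 1)%R)).

From HB Require Import structures.
From mathcomp Require Import all_boot all_order all_algebra.
From mathcomp Require Import zify ring.
Import GRing.Theory Num.Theory.
Set Implicit Arguments. Unset Strict Implicit.

(* If a square matrix H_m = (a i j)_{i,j<m} has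
      zeros below its subdiagonal and ones on it, expanding along the last
      row (after replacing the last column by an arbitrary vector) gives
        det H_{m+1} = sum_{k<=m} (-1)^(m-k) * a k m * det H_k.  For the entries a k m = C(k+1, m-k+1) of
      catalan_mx, the matching identity
        C_{m+1} = sum_{k<=m} (-1)^(m-k) * C(k+1, m-k+1) * C_k
      follows by telescoping: the partial sums of the alternating sum
      sum_{k<=N} (-1)^(N-k) C(k+1, N-k) C_k have a closed form, derived from
      a polynomial identity between binomials and from C_{k+1}/C_k.
   3. Both sequences satisfy the same recurrence with the same initial
      value 1, so det (catalan_mx n) = C_n. *)

Lemma catalan_mul_succ k : catalan k * k.+1 = 'C(2 * k, k).
Proof.
have ballot : 'C(2 * k, k) = k.+1 * ('C(2 * k, k) - 'C(2 * k, k.+1)).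
  rewrite mulnBr mul_bin_left -mulnBl.
  by rewrite (_ : k.+1 - (2 * k - k) = 1) ?mul1n //; lia.
by rewrite /catalan {1}ballot mulKn // mulnC -ballot.
Qed.

Lemma catalanS k : (k + 2) * catalan k.+1 = 2 * (2 * k + 1) * catalan k.
Proof.
have diag2 : (2 * k + 2) * 'C(2 * k + 1, k) = k.+1 * 'C(2 * k + 2, k.+1).
  by have := mul_bin_diag (2 * k + 2) k; rewrite (_ : (2 * k + 2).-1 = 2 * k + 1) //; lia.
have diag1 : (2 * k + 1) * 'C(2 * k, k) = k.+1 * 'C(2 * k + 1, k.+1).
  by have := mul_bin_diag (2 * k + 1) k; rewrite (_ : (2 * k + 1).-1 = 2 * k) //; lia.
have sym : 'C(2 * k + 1, k) = 'C(2 * k + 1, k.+1).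
  by rewrite -(@bin_sub (2 * k + 1) k.+1); [congr 'C(_, _) | ]; lia.
have central : 'C(2 * k + 2, k.+1) = 2 * 'C(2 * k + 1, k.+1).
  apply/eqP; rewrite -(eqn_pmul2l (ltn0Sn k)) -diag2 sym.
  by apply/eqP; rewrite (_ : 2 * k + 2 = 2 * k.+1); [ring | lia].
apply/eqP; rewrite -(eqn_pmul2l (ltn0Sn k)) -(eqn_pmul2l (ltn0Sn k)); apply/eqP.
have cat1 := catalan_mul_succ k.+1; rewrite (_ : 2 * k.+1 = 2 * k + 2) in cat1; last lia.
have -> : k.+1 * (k.+1 * ((k + 2) * catalan k.+1)) = k.+1 * (catalan k.+1 * k.+2) * k.+1.
  by rewrite addn2; ring.
have double : k.+1 * 'C(2 * k + 2, k.+1) = 2 * ((2 * k + 1) * 'C(2 * k, k)).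
  by rewrite central mulnCA diag1.
by rewrite cat1 double -catalan_mul_succ; ring.
Qed.

Lemma binomial_three_rows k i :
  (k + i + 1) * (k + i + 2) * 'C(k.+1, i.+1) =
  2 * (2 * k + 1) * (k.+1 * 'C(k, i)) + k * (k.+1 * 'C(k.-1, i.+1)).
Proof.
rewrite mul_bin_diag (mulnCA k) mul_bin_down (mulnCA k.+1) mul_bin_down.
case: (leqP i k) => [leik | ltki]; last by rewrite bin_small ?muln0 ?addn0 //; lia.
have [d ->] : exists d, k = i + d by exists (k - i); lia.
have -> : i + d - i.+1 = d.-1 by lia.
have -> : (i + d).+1 - i.+1 = d by lia.
by case: d {leik} => [|d] /=; set X := 'C(_, _); ring.
Qed.

(* The telescoping identity: the k-th partial sum of the alternating sum,
   scaled, differs from the (k-1)-th one by a term of this shape. *)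
Lemma catalan_binomial_step k i :
  (k + i + 1) * (k + i + 2) * 'C(k.+1, i.+1) * catalan k =
  k.+1 * k.+2 * 'C(k, i) * catalan k.+1 + k * k.+1 * 'C(k.-1, i.+1) * catalan k.
Proof.
have -> : k.+1 * k.+2 * 'C(k, i) * catalan k.+1 =
          (k.+1 * 'C(k, i)) * ((k + 2) * catalan k.+1) by rewrite -addn2; ring.
by rewrite catalanS binomial_three_rows; ring.
Qed.

Local Open Scope ring_scope.

Section HessenbergDeterminant.
Variables (R : comRingType) (a : nat -> nat -> R).
Hypothesis a_below : forall i j, (j.+1 < i)%N -> a i j = 0.
Hypothesis a_subdiag : forall j, a j.+1 j = 1.

Definition hess_mx m : 'M[R]_m := \matrix_(i < m, j < m) a i j.

Definition hess_lastcol_mx m (v : nat -> R) : 'M[R]_m :=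
  \matrix_(i < m, j < m) if (val j).+1 == m then v i else a i j.

(* Expansion along the last row, which has only two nonzero entries. *)
Lemma det_hess_lastcolS m v :
  \det (hess_lastcol_mx m.+2 v) =
  v m.+1 * \det (hess_mx m.+1) - \det (hess_lastcol_mx m.+1 v).
Proof.
rewrite (expand_det_row _ ord_max) !big_ord_recr /=.
rewrite big1 ?add0r; last first.
  move=> j _; have ltjm := ltn_ord j.
  rewrite !mxE /= ifF; last by apply/negbTE; rewrite eqSS; apply/eqP; lia.
  by rewrite a_below ?mul0r //; lia.
rewrite !mxE /= eqxx ifF; last by apply/negbTE; apply/eqP; lia.
rewrite a_subdiag mul1r /cofactor.
have -> : row' ord_max (col' (widen_ord (leqnSn m.+1) ord_max) (hess_lastcol_mx m.+2 v))
          = hess_lastcol_mx m.+1 v.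
  apply/matrixP => i [j ltjm]; rewrite !mxE lift_max /= /bump.
  case: (ltngtP m j) => ltmj; first lia.
    by rewrite add0n; case: eqP => ?; case: eqP => ? //; lia.
  by rewrite add1n -ltmj !eqxx.
have -> : row' ord_max (col' ord_max (hess_lastcol_mx m.+2 v)) = hess_mx m.+1.
  apply/matrixP => i [j ltjm]; rewrite !mxE !lift_max /=.
  by case: eqP => // h; rewrite /bump leqNgt ltjm add0n in h; lia.
have -> : (m.+1 + m = (2 * m).+1)%N by lia.
have -> : (m.+1 + m.+1 = 2 * m.+1)%N by lia.
by rewrite exprS !exprM sqrrN !expr1n; ring.
Qed.

Lemma det_hess_lastcol m v :
  \det (hess_lastcol_mx m.+1 v) =
  \sum_(k < m.+1) (-1) ^+ (m - k) * v k * \det (hess_mx k).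
Proof.
elim: m => [|m IH]; first by rewrite det_mx11 big_ord1 det_mx00 !mxE mulr1 mul1r.
rewrite det_hess_lastcolS IH [RHS]big_ord_recr /= subnn expr0 mul1r addrC.
congr (_ + _); rewrite -sumrN; apply: eq_bigr => k _.
by rewrite subSn ?exprS ?mulN1r ?mulNr //; have := ltn_ord k; lia.
Qed.

Lemma det_hess_rec m :
  \det (hess_mx m.+1) = \sum_(k < m.+1) (-1) ^+ (m - k) * a k m * \det (hess_mx k).
Proof.
rewrite -(det_hess_lastcol m (a^~ m)); congr (\det _).
by apply/matrixP => i j; rewrite !mxE; case: eqP => // /succn_inj ->.
Qed.

End HessenbergDeterminant.

Definition alt_term (N k : nat) : int :=
  (-1) ^+ (N - k) * Posz ('C(k.+1, N - k) * catalan k)%N.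

Lemma alt_partial_sum N K : (K < N)%N ->
  Posz (N * N.+1)%N * \sum_(k < K.+1) alt_term N k =
  (-1) ^+ (N - K) * Posz (K.+1 * K.+2 * 'C(K, N - K.+1) * catalan K.+1)%N.
Proof.
elim: K => [|K IH] ltKN.
  rewrite big_ord1 /alt_term subn0 mulrCA; congr (_ * _); rewrite -PoszM; congr Posz.
  case: N ltKN => // i _.
  have := catalan_binomial_step 0 i; rewrite /= subSS subn0 muln0 mul0n addn0 => <-.
  by rewrite !mulnA; congr (_ * _ * _ * _)%N; lia.
rewrite big_ord_recr mulrDr IH; last lia.
have [i ->] : exists i, N = (K + i + 2)%N by exists (N - K - 2)%N; lia.
rewrite /alt_term /=.
have -> : (K + i + 2 - K = i.+2)%N by lia.
have -> : (K + i + 2 - K.+1 = i.+1)%N by lia.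
have -> : (K + i + 2 - K.+2 = i)%N by lia.
have step := catalan_binomial_step K.+1 i.
rewrite (_ : (K.+1 + i + 1 = K + i + 2)%N) in step; last lia.
rewrite (_ : (K.+1 + i + 2 = (K + i + 2).+1)%N) in step; last lia.
by rewrite mulrCA -PoszM mulnA step PoszD exprS; ring.
Qed.

Lemma alt_sum_eq0 M : \sum_(k < M.+2) alt_term M.+1 k = 0.
Proof.
have nz : Posz (M.+1 * M.+2)%N != 0 by [].
apply/eqP; rewrite -(mulrI_eq0 _ (lregP nz)) big_ord_recr /= mulrDr alt_partial_sum //.
rewrite /alt_term subSn // !subnn expr1 expr0 !bin0 !muln1 mul1r.
by apply/eqP; rewrite -PoszM mulnA; ring.
Qed.

Lemma catalan_alt_rec m : Posz (catalan m.+1) =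
  \sum_(k < m.+1) (-1) ^+ (m - k) * Posz ('C(k.+1, (m - k).+1) * catalan k)%N.
Proof.
move/eqP: (alt_sum_eq0 m).
rewrite big_ord_recr /= /alt_term subnn expr0 bin0 mul1n mul1r addrC addr_eq0 => /eqP ->.
rewrite -sumrN; apply: eq_bigr => k _; have ltkm := ltn_ord k.
by rewrite subSn // exprS mulN1r mulNr opprK.
Qed.

Definition catalan_entry (i j : nat) : int := Posz (binomz i.+1 (Posz j - Posz i + 1)).

Lemma catalan_entry_below i j : (j.+1 < i)%N -> catalan_entry i j = 0.
Proof.
by move=> ltji; rewrite /catalan_entry (_ : _ - _ + 1 = Negz (i - j - 2)) //; rewrite NegzE; lia.
Qed.

Lemma catalan_entry_subdiag j : catalan_entry j.+1 j = 1.
Proof. by rewrite /catalan_entry (_ : Posz j - Posz j.+1 + 1 = Posz 0) ?bin0 //; lia. Qed.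

Lemma catalan_entryE k m : (k <= m)%N -> catalan_entry k m = Posz 'C(k.+1, (m - k).+1).
Proof. by move=> lekm; rewrite /catalan_entry (_ : _ - _ + 1 = Posz (m - k).+1) //; lia. Qed.

Lemma det_hess_catalan n : \det (hess_mx catalan_entry n) = Posz (catalan n).
Proof.
elim/ltn_ind: n => -[|m] IH; first by rewrite det_mx00.
rewrite (det_hess_rec catalan_entry_below catalan_entry_subdiag) catalan_alt_rec.
apply: eq_bigr => k _; have ltkm := ltn_ord k.
by rewrite catalan_entryE // IH // PoszM mulrA.
Qed.

Theorem theorem1 (n : nat) (hn : (0 < n)%N) :
  (Posz (catalan n) = \det (catalan_mx n))%R.
Proof. by rewrite -det_hess_catalan. Qed.
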